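(* For each $\lambda\in\mathbb N$ and $n\in\mathbb N$ there exists a nonzero $p_{0,\lambda}\in\mathcal S((\mathbb T,\mathbb R)_x)$ such that each $p_{0,\lambda}^{(-j;\lambda)}$, $1\le j\le n$, is well-defined and belongs to $\mathcal S((\mathbb T,\mathbb R)_x)$, and $$\|(p_{0,\lambda},p_{0,\lambda}^{(-1;\lambda)},\dots,p_{0,\lambda}^{(-n;\lambda)})\|_{H^m_x}\lesssim_{m,n}\|p_{0,\lambda}\|_{L^2}\quad\text{for every }m\in\mathbb N_0,$$ with implicit constant independent of $\lambda$, and with one of the following properties: either $p_{0,\lambda},\dots,p^{(-n;\lambda)}_{0,\lambda}$ are all supported in $(-1,1)$; or their Fourier transforms $\mathcal F[p_{0,\lambda}],\dots,\mathcal F[p^{(-n;\lambda)}_{0,\lambda}]$ are all supported in $(-1,1)$.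
   Context: Here $(\mathbb T,\mathbb R)_x$ denotes either $\mathbb T_x=\mathbb R/2\pi\mathbb Z$ or $\mathbb R_x$. Define the right inverse $\partial_x^{-1}$ of $\partial_x$ by $\partial_x^{-1}g(x)=\int_0^xg(x')dx'+\int_0^{2\pi}x'g(x')dx'$ on $\mathbb T_x$ (defined when $\int g\,dx=0$) and $\partial_x^{-1}g(x)=\int_{-\infty}^xg(x')dx'$ on $\mathbb R_x$. For a function $g$ for which these are defined, set $g^{(-1;\lambda)}=i\lambda e^{-i\lambda x}\partial_x^{-1}(e^{i\lambda x}g)$ and inductively $g^{(-j-1;\lambda)}=i\lambda e^{-i\lambda x}\partial_x^{-1}(e^{i\lambda x}g^{(-j;\lambda)})$. *)

From Stdlib Require Import Reals ZArith.
From Coquelicot Require Import Coquelicot.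
Open Scope R_scope.

(* The two settings (T,R)_x : the torus T = R/2piZ (functions on R that are
   2pi-periodic) or the real line R. *)
Inductive setting := Torus | Line.

Definition re (f : R -> C) : R -> R := fun x => Re (f x).
Definition im (f : R -> C) : R -> R := fun x => Im (f x).

Definition cexpi (t : R) : C := (cos t, sin t).

Definition cDn (k : nat) (f : R -> C) : R -> C :=
  fun x => (Derive_n (re f) k x, Derive_n (im f) k x).

Definition smooth (f : R -> C) : Prop :=
  forall k x, ex_derive_n (re f) k x /\ ex_derive_n (im f) k x.

Definition schwartz (d : setting) (f : R -> C) : Prop :=
  match d with
  | Torus => smooth f /\ forall x, f (x + 2 * PI) = f x
  | Line => smooth f /\
      forall (a b : nat), exists M : R, forall x, Rabs x ^ a * Cmod (cDn b f x) <= M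
  end.

Definition cex_RInt (f : R -> C) (a b : R) : Prop :=
  ex_RInt (re f) a b /\ ex_RInt (im f) a b.
Definition cRInt (f : R -> C) (a b : R) : C :=
  (RInt (re f) a b, RInt (im f) a b).
Definition cex_RInt_gen (f : R -> C) (F G : (R -> Prop) -> Prop) : Prop :=
  ex_RInt_gen (re f) F G /\ ex_RInt_gen (im f) F G.
Definition cRInt_gen (f : R -> C) (F G : (R -> Prop) -> Prop) : C :=
  (RInt_gen (re f) F G, RInt_gen (im f) F G).

Definition antider_defined (d : setting) (g : R -> C) : Prop :=
  match d with
  | Torus => (forall a b, cex_RInt g a b) /\
             (forall a b, cex_RInt (fun t => Cmult (RtoC t) (g t)) a b) /\
             cRInt g 0 (2 * PI) = RtoC 0
  | Line => forall x, cex_RInt_gen g (Rbar_locally m_infty) (at_point x)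
  end.

Definition antider (d : setting) (g : R -> C) : R -> C :=
  match d with
  | Torus => fun x => Cplus (cRInt g 0 x)
                            (cRInt (fun t => Cmult (RtoC t) (g t)) 0 (2 * PI))
  | Line => fun x => cRInt_gen g (Rbar_locally m_infty) (at_point x)
  end.

Definition modul (lam : R) (g : R -> C) : R -> C :=
  fun x => Cmult (cexpi (lam * x)) (g x).

(* g |-> g^{(-1;lam)} = i lam e^{-i lam x} d_x^{-1}(e^{i lam x} g) *)
Definition neg_step (d : setting) (lam : R) (g : R -> C) : R -> C :=
  fun x => Cmult (Cmult (0, lam) (cexpi (- (lam * x))))
                 (antider d (modul lam g) x).

Definition neg_iter (d : setting) (lam : R) (j : nat) (g : R -> C) : R -> C :=
  Nat.iter j (neg_step d lam) g.

Definition neg_step_defined (d : setting) (lam : R) (g : R -> C) : Prop :=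
  antider_defined d (modul lam g).

Definition L2sq (d : setting) (f : R -> C) : R :=
  match d with
  | Torus => RInt (fun x => Cmod (f x) ^ 2) 0 (2 * PI)
  | Line => RInt_gen (fun x => Cmod (f x) ^ 2)
                     (Rbar_locally m_infty) (Rbar_locally p_infty)
  end.

Definition L2norm (d : setting) (f : R -> C) : R := sqrt (L2sq d f).

Definition Hnorm (d : setting) (m : nat) (f : R -> C) : R :=
  sqrt (sum_n (fun k => L2sq d (cDn k f)) m).

Definition tuple_Hnorm (d : setting) (m n : nat) (lam : R) (g : R -> C) : R :=
  sum_n (fun j => Hnorm d m (neg_iter d lam j g)) n.

Definition fourierR (f : R -> C) (xi : R) : C :=
  cRInt_gen (fun x => Cmult (cexpi (- (xi * x))) (f x))
            (Rbar_locally m_infty) (Rbar_locally p_infty).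
Definition fourierT (f : R -> C) (k : Z) : C :=
  cRInt (fun x => Cmult (cexpi (- (IZR k * x))) (f x)) 0 (2 * PI).

(* supp f (closure of {f <> 0}) is contained in (-1,1) *)
Definition supported_in_unit (d : setting) (f : R -> C) : Prop :=
  match d with
  | Torus => exists r, r < 1 /\
      forall x, - PI <= x <= PI -> r < Rabs x -> f x = RtoC 0
  | Line => exists r, r < 1 /\ forall x, r < Rabs x -> f x = RtoC 0
  end.

Definition fourier_supported_in_unit (d : setting) (f : R -> C) : Prop :=
  match d with
  | Torus => exists r, r < 1 /\
      forall k : Z, r < Rabs (IZR k) -> fourierT f k = RtoC 0
  | Line => exists r, r < 1 /\
      forall xi, r < Rabs xi -> fourierR f xi = RtoC 0
  end.

From Stdlib Require Import Reals ZArith Lra Lia.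
From Stdlib Require Import FunctionalExtensionality Classical IndefiniteDescription.
From Coquelicot Require Import Coquelicot.
Open Scope R_scope.

(* Let χ be a smooth bump supported in the window (1/4, 3/4) (periodized on the torus)
   and p = (∂ + iλ)^(n+1) χ.  Since e^{iλx} (∂ + iλ) h = ∂ (e^{iλx} h) and h vanishes left
   of the window, the right inverse gives p^(-j;λ) = (iλ)^j (∂ + iλ)^(n+1-j) χ, again
   supported in the window; on the torus the extra term ∫_0^{2π} t e^{iλt} g(t) dt vanishes
   after one more integration by parts, as long as two factors ∂ + iλ remain (j < n).
   All these functions are combinations of χ, ..., χ^(n+1) with coefficients O((2λ)^(n+1)),
   so their H^m norms are O(λ^(n+1)), while |p| ≥ λ^(n+1) χ - O(2^n λ^n) makes
   ‖p‖_{L²} ≳ λ^(n+1) for large λ.  The finitely many small λ are absorbed into the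
   constant, p being never 0. *)

(** * Flat functions and bumps *)

Definition flat (m : nat) (y : R) : R :=
  if Rle_dec y 0 then 0 else (/ y) ^ m * exp (- / y).

Lemma flat_pos m y : 0 < y -> flat m y = (/ y) ^ m * exp (- / y).
Proof. intros H; unfold flat; destruct (Rle_dec y 0); [lra | reflexivity]. Qed.

Lemma flat_nonpos m y : y <= 0 -> flat m y = 0.
Proof. intros H; unfold flat; destruct (Rle_dec y 0); [reflexivity | lra]. Qed.

Lemma pow_le_fact_exp N t : 0 <= t -> t ^ N <= INR (fact N) * exp t.
Proof.
  intros Ht.
  assert (Hfact : 0 < INR (fact N)) by apply INR_fact_lt_0.
  assert (Hterm : t ^ N / INR (fact N) <= exp t).
  { eapply Rle_trans; [|apply (exp_ge_taylor t N Ht)].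
    destruct N as [|N]; cbn [sum_f_R0]; [lra|].
    assert (0 <= sum_f_R0 (fun k => t ^ k / INR (fact k)) N); [|lra].
    apply cond_pos_sum; intros k.
    apply Rdiv_le_0_compat; [apply pow_le; lra | apply INR_fact_lt_0]. }
  apply Rmult_le_compat_l with (r := INR (fact N)) in Hterm; [|lra].
  replace (INR (fact N) * (t ^ N / INR (fact N))) with (t ^ N) in Hterm by (field; lra).
  exact Hterm.
Qed.

Lemma flat_div_le m h : 0 < h -> flat m h / h <= INR (fact (S (S m))) * h.
Proof.
  intros Hh. rewrite flat_pos by exact Hh.
  set (K := INR (fact (S (S m)))).
  set (t := / h).
  assert (Ht : 0 < t) by (apply Rinv_0_lt_compat; exact Hh).
  assert (He : 0 < exp t) by apply exp_pos.
  pose proof (pow_le_fact_exp (S (S m)) t ltac:(lra)) as E. fold K in E.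
  assert (Hht : h = / t) by (unfold t; rewrite Rinv_inv; reflexivity).
  rewrite exp_Ropp, Hht.
  replace (t ^ m * / exp t / / t) with (t ^ S (S m) * / (t * exp t)) by (simpl; field; lra).
  replace (K * / t) with (K * exp t * / (t * exp t)) by (field; lra).
  apply Rmult_le_compat_r; [left; apply Rinv_0_lt_compat; nra | exact E].
Qed.

Lemma is_derive_flat_0 m : is_derive (flat m) 0 0.
Proof.
  apply is_derive_Reals. intros eps Heps.
  set (K := INR (fact (S (S m)))).
  assert (HK : 0 < K) by apply INR_fact_lt_0.
  assert (Hd : 0 < eps / (2 * K)) by (apply Rdiv_lt_0_compat; lra).
  exists (mkposreal _ Hd). intros h Hh0 Hh. simpl in Hh.
  rewrite Rplus_0_l, (flat_nonpos m 0 (Rle_refl 0)), !Rminus_0_r.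
  destruct (Rle_dec h 0) as [Hn | Hp].
  - rewrite flat_nonpos by exact Hn. unfold Rdiv. rewrite Rmult_0_l, Rabs_R0. exact Heps.
  - assert (Hp' : 0 < h) by lra.
    assert (0 <= flat m h / h).
    { rewrite flat_pos by lra. apply Rdiv_le_0_compat; [|lra].
      apply Rmult_le_pos; [apply pow_le; left; apply Rinv_0_lt_compat; lra | left; apply exp_pos]. }
    pose proof (flat_div_le m h Hp') as B. fold K in B.
    rewrite Rabs_pos_eq by lra. rewrite Rabs_pos_eq in Hh by lra.
    assert (Hlt : K * h < K * (eps / (2 * K))) by (apply Rmult_lt_compat_l; lra).
    replace (K * (eps / (2 * K))) with (eps / 2) in Hlt by (field; lra). lra.
Qed.

Lemma is_derive_flat m y :
  is_derive (flat m) y (- INR m * flat (S m) y + flat (S (S m)) y).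
Proof.
  destruct (Rtotal_order y 0) as [Hn | [H0 | Hp]].
  - rewrite !flat_nonpos by lra. replace (- INR m * 0 + 0) with 0 by ring.
    apply is_derive_ext_loc with (f := fun _ => 0).
    + assert (Hy : 0 < - y) by lra. exists (mkposreal _ Hy). intros t Ht.
      apply Rabs_lt_between' in Ht; simpl in Ht. rewrite flat_nonpos; [reflexivity | lra].
    + apply is_derive_Reals, derivable_pt_lim_const.
  - subst y. rewrite !flat_nonpos by lra. replace (- INR m * 0 + 0) with 0 by ring.
    apply is_derive_flat_0.
  - rewrite !flat_pos by lra.
    apply is_derive_ext_loc with (f := fun t => (/ t) ^ m * exp (- / t)).
    + exists (mkposreal y Hp). intros t Ht.
      apply Rabs_lt_between' in Ht; simpl in Ht. rewrite flat_pos by lra. reflexivity.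
    + destruct m as [|m].
      * auto_derive; [lra|]. simpl. field. lra.
      * auto_derive; [lra|]. rewrite !S_INR. cbn [pow Nat.pred].
        replace (match m with 0%nat => 1 | S _ => INR m + 1 end) with (INR m + 1)
          by (destruct m; simpl; ring).
        field. lra.
Qed.

(* Expressions closed under differentiation ([dexpr]): the smoothness of [bump d] is
   read off [Derive_n_eval]. *)
Inductive expr : Type :=
| ECst (c : R) | EVar | EAdd (a b : expr) | EMul (a b : expr)
| ECos (a : expr) | ESin (a : expr) | EFlat (m : nat) (a : expr).

Fixpoint eval (e : expr) (x : R) : R :=
  match e with
  | ECst c => c
  | EVar => x
  | EAdd a b => eval a x + eval b x
  | EMul a b => eval a x * eval b x
  | ECos a => cos (eval a x)
  | ESin a => sin (eval a x)
  | EFlat m a => flat m (eval a x)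
  end.

Fixpoint dexpr (e : expr) : expr :=
  match e with
  | ECst _ => ECst 0
  | EVar => ECst 1
  | EAdd a b => EAdd (dexpr a) (dexpr b)
  | EMul a b => EAdd (EMul (dexpr a) b) (EMul a (dexpr b))
  | ECos a => EMul (EMul (ECst (-1)) (ESin a)) (dexpr a)
  | ESin a => EMul (ECos a) (dexpr a)
  | EFlat m a =>
      EMul (EAdd (EMul (ECst (- INR m)) (EFlat (S m) a)) (EFlat (S (S m)) a)) (dexpr a)
  end.

Lemma is_derive_eval e x : is_derive (eval e) x (eval (dexpr e) x).
Proof.
  induction e; simpl.
  - apply is_derive_Reals, derivable_pt_lim_const.
  - apply is_derive_Reals, derivable_pt_lim_id.
  - apply (is_derive_plus (eval e1) (eval e2)); assumption.
  - apply (is_derive_mult (eval e1) (eval e2)); auto. intros; apply Rmult_comm.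
  - apply is_derive_Reals. apply is_derive_Reals in IHe.
    replace (-1 * sin (eval e x) * eval (dexpr e) x)
      with (- sin (eval e x) * eval (dexpr e) x) by ring.
    apply (derivable_pt_lim_comp (eval e) cos x); auto. apply derivable_pt_lim_cos.
  - apply is_derive_Reals. apply is_derive_Reals in IHe.
    apply (derivable_pt_lim_comp (eval e) sin x); auto. apply derivable_pt_lim_sin.
  - apply is_derive_Reals. apply is_derive_Reals in IHe.
    apply (derivable_pt_lim_comp (eval e) (flat m) x); auto. apply is_derive_Reals, is_derive_flat.
Qed.

Lemma Derive_n_eval e k x : Derive_n (eval e) k x = eval (Nat.iter k dexpr e) x.
Proof.
  revert x; induction k as [|k IH]; intros x; simpl; [reflexivity|].
  rewrite (Derive_ext _ (eval (Nat.iter k dexpr e)) x IH).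
  apply is_derive_unique, is_derive_eval.
Qed.

Lemma is_derive_Derive_n_eval e k x :
  is_derive (Derive_n (eval e) k) x (Derive_n (eval e) (S k) x).
Proof.
  assert (E : Derive_n (eval e) k = eval (Nat.iter k dexpr e))
    by (extensionality t; apply Derive_n_eval).
  rewrite E, Derive_n_eval. apply is_derive_eval.
Qed.

Inductive has_flat_factor (g : expr) : expr -> Prop :=
| FlatFactor m : has_flat_factor g (EFlat m g)
| FlatFactorMulL a b : has_flat_factor g a -> has_flat_factor g (EMul a b)
| FlatFactorMulR a b : has_flat_factor g b -> has_flat_factor g (EMul a b)
| FlatFactorAdd a b : has_flat_factor g a -> has_flat_factor g b -> has_flat_factor g (EAdd a b).

Lemma has_flat_factor_dexpr g e : has_flat_factor g e -> has_flat_factor g (dexpr e).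
Proof.
  induction 1; simpl.
  - apply FlatFactorMulL, FlatFactorAdd; [apply FlatFactorMulR, FlatFactor | apply FlatFactor].
  - apply FlatFactorAdd; apply FlatFactorMulL; auto.
  - apply FlatFactorAdd; apply FlatFactorMulR; auto.
  - apply FlatFactorAdd; auto.
Qed.

Lemma eval_has_flat_factor g e x : has_flat_factor g e -> eval g x <= 0 -> eval e x = 0.
Proof.
  intros Hg Hx; induction Hg; simpl.
  - apply flat_nonpos; exact Hx.
  - rewrite IHHg; ring.
  - rewrite IHHg; ring.
  - rewrite IHHg1, IHHg2; ring.
Qed.

Lemma Derive_n_flat_eq0 g k x : eval g x <= 0 -> Derive_n (eval (EFlat 0 g)) k x = 0.
Proof.
  intros Hx. rewrite Derive_n_eval. apply (eval_has_flat_factor g); [|exact Hx].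
  induction k as [|k IH]; simpl; [apply FlatFactor | apply has_flat_factor_dexpr, IH].
Qed.

Definition off_window (y : R) : Prop := y <= 1/4 \/ 3/4 <= y.

Definition window_supported (d : setting) (f : R -> R) : Prop :=
  match d with
  | Torus => (forall y, f (y + 2 * PI) = f y) /\
             (forall y, - PI <= y <= PI -> off_window y -> f y = 0)
  | Line => forall y, off_window y -> f y = 0
  end.

(* [eval (phase d)] is positive exactly on the window, modulo 2π on the torus. *)
Definition phase (d : setting) : expr :=
  match d with
  | Torus => EAdd (ECos (EAdd EVar (ECst (- (1/2))))) (ECst (- cos (1/4)))
  | Line => EAdd (ECst (1/16))
              (EMul (ECst (-1)) (EMul (EAdd EVar (ECst (- (1/2)))) (EAdd EVar (ECst (- (1/2))))))
  end.

Definition bump (d : setting) : R -> R := eval (EFlat 0 (phase d)).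

Lemma is_derive_Derive_n_bump d a x :
  is_derive (Derive_n (bump d) a) x (Derive_n (bump d) (S a) x).
Proof. apply is_derive_Derive_n_eval. Qed.

Lemma eval_phase_Torus x : eval (phase Torus) x = cos (x - 1/2) - cos (1/4).
Proof. reflexivity. Qed.

Lemma eval_phase_Line x : eval (phase Line) x = 1/16 - (x - 1/2) ^ 2.
Proof. simpl. ring. Qed.

Lemma cos_le_cos_quarter u :
  - PI - 1/2 <= u <= PI - 1/2 -> off_window (u + 1/2) -> cos u <= cos (1/4).
Proof.
  intros Hu Hoff. pose proof PI2_1.
  destruct Hoff as [Hl | Hr].
  - rewrite <- (cos_neg u). destruct (Rle_lt_dec (- u) PI).
    + apply cos_decr_1; lra.
    + replace (cos (- u)) with (cos (2 * PI + u)).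
      * apply cos_decr_1; lra.
      * rewrite cos_neg, <- (cos_period u 1). f_equal. simpl. ring.
  - apply cos_decr_1; lra.
Qed.

Lemma window_supported_bump d a : window_supported d (Derive_n (bump d) a).
Proof.
  destruct d; simpl.
  - split.
    + intros y. rewrite <- Derive_n_comp_trans. apply Derive_n_ext. intros t.
      unfold bump. cbn [eval]. rewrite !eval_phase_Torus.
      replace (t + 2 * PI - 1/2) with (t - 1/2 + 2 * INR 1 * PI) by (simpl; ring).
      rewrite cos_period. reflexivity.
    + intros y Hy Hoff. apply Derive_n_flat_eq0. rewrite eval_phase_Torus.
      assert (cos (y - 1/2) <= cos (1/4)); [|lra].
      apply cos_le_cos_quarter; [lra|]. replace (y - 1/2 + 1/2) with y by ring. exact Hoff.
  - intros y Hoff. apply Derive_n_flat_eq0. rewrite eval_phase_Line.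
    destruct Hoff; nra.
Qed.

Lemma window_supported_Torus_ends f :
  window_supported Torus f -> f 0 = 0 /\ f (2 * PI) = 0.
Proof.
  intros [Hper Hoff]. pose proof PI_RGT_0.
  assert (H0 : f 0 = 0) by (apply Hoff; unfold off_window; lra).
  split; [exact H0|]. rewrite <- (Rplus_0_l (2 * PI)), Hper. exact H0.
Qed.

(* The window lies in [0, cell_end d], a full period on the torus. *)
Definition cell_end (d : setting) : R := match d with Torus => 2 * PI | Line => 1 end.

Lemma cell_end_ge_1 d : 1 <= cell_end d.
Proof. destruct d; simpl; [pose proof PI2_1 |]; lra. Qed.

Lemma phase_lower d : exists y0, 0 < y0 /\
  forall x, 7/16 <= x <= 9/16 -> y0 <= eval (phase d) x.
Proof.
  destruct d.
  - pose proof PI2_1.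
    exists (cos (1/16) - cos (1/4)). split.
    + assert (cos (1/4) < cos (1/16)) by (apply cos_decreasing_1; lra). lra.
    + intros x Hx. rewrite eval_phase_Torus.
      assert (cos (1/16) <= cos (x - 1/2)); [|lra].
      destruct (Rle_lt_dec 0 (x - 1/2)).
      * apply cos_decr_1; lra.
      * rewrite <- (cos_neg (x - 1/2)). apply cos_decr_1; lra.
  - exists (15/256). split; [lra|]. intros x Hx. rewrite eval_phase_Line. nra.
Qed.

Lemma bump_lower d : exists delta, 0 < delta /\
  forall x, 7/16 <= x <= 9/16 -> delta <= bump d x.
Proof.
  destruct (phase_lower d) as [y0 [Hy0 Hlow]].
  exists (exp (- / y0)). split; [apply exp_pos|]. intros x Hx.
  specialize (Hlow x Hx). unfold bump. cbn [eval].
  rewrite flat_pos by lra. simpl. rewrite Rmult_1_l.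
  destruct (Req_dec (eval (phase d) x) y0) as [-> | Hne]; [lra|].
  left. apply exp_increasing, Ropp_lt_contravar, Rinv_lt_contravar; nra.
Qed.

Definition cderive (F f : R -> C) : Prop :=
  forall t, is_derive (re F) t (re f t) /\ is_derive (im F) t (im f t).

Definition ccontinuous (f : R -> C) : Prop :=
  forall t, continuous (re f) t /\ continuous (im f) t.

Lemma cex_RInt_continuous f a b : ccontinuous f -> cex_RInt f a b.
Proof.
  intros Hf. split; apply (ex_RInt_continuous (V := R_CompleteNormedModule));
    intros t _; apply Hf.
Qed.

Lemma cRInt_cderive F f a b : cderive F f -> ccontinuous f -> cRInt f a b = Cminus (F b) (F a).
Proof.
  intros HF Hf.
  assert (Hre : is_RInt (re f) a b (re F b - re F a)).
  { apply (is_RInt_derive (re F) (re f)); intros t _; apply HF || apply Hf. }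
  assert (Him : is_RInt (im f) a b (im F b - im F a)).
  { apply (is_RInt_derive (im F) (im f)); intros t _; apply HF || apply Hf. }
  unfold cRInt. rewrite (is_RInt_unique _ _ _ _ Hre), (is_RInt_unique _ _ _ _ Him).
  reflexivity.
Qed.

Lemma ccontinuous_mul_id f : ccontinuous f -> ccontinuous (fun s => Cmult (RtoC s) (f s)).
Proof.
  intros Hf t. destruct (Hf t) as [Hre Him]. unfold re, im, RtoC, Cmult in *; simpl.
  split.
  - apply (continuous_minus (fun s => s * fst (f s)) (fun s => 0 * snd (f s))).
    + apply (continuous_mult (fun s => s) (fun s => fst (f s))); [apply continuous_id | exact Hre].
    + apply (continuous_mult (fun _ => 0) (fun s => snd (f s))); [apply continuous_const | exact Him].
  - apply (continuous_plus (fun s => s * snd (f s)) (fun s => 0 * fst (f s))).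
    + apply (continuous_mult (fun s => s) (fun s => snd (f s))); [apply continuous_id | exact Him].
    + apply (continuous_mult (fun _ => 0) (fun s => fst (f s))); [apply continuous_const | exact Hre].
Qed.

Lemma cderive_mul_id G g H :
  cderive G g -> cderive H G ->
  cderive (fun s => Cminus (Cmult (RtoC s) (G s)) (H s)) (fun s => Cmult (RtoC s) (g s)).
Proof.
  intros HG HH t. destruct (HG t) as [Gre Gim]. destruct (HH t) as [Hre Him].
  unfold re, im, RtoC, Cminus, Cplus, Copp, Cmult in *; simpl.
  split.
  - apply (is_derive_ext (fun s => s * fst (G s) - fst (H s))).
    { intros s. change (s * fst (G s) - fst (H s) = s * fst (G s) - 0 * snd (G s) + - fst (H s)).
      ring. }
    replace (t * fst (g t) - 0 * snd (g t)) with ((1 * fst (G t) + t * fst (g t)) - fst (G t))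
      by ring.
    apply (is_derive_minus (fun s => s * fst (G s))); [|exact Hre].
    apply (is_derive_mult (fun s => s) (fun s => fst (G s)));
      [apply is_derive_Reals, derivable_pt_lim_id | exact Gre |].
    intros; apply Rmult_comm.
  - apply (is_derive_ext (fun s => s * snd (G s) - snd (H s))).
    { intros s. change (s * snd (G s) - snd (H s) = s * snd (G s) + 0 * fst (G s) + - snd (H s)).
      ring. }
    replace (t * snd (g t) + 0 * fst (g t)) with ((1 * snd (G t) + t * snd (g t)) - snd (G t))
      by ring.
    apply (is_derive_minus (fun s => s * snd (G s))); [|exact Him].
    apply (is_derive_mult (fun s => s) (fun s => snd (G s)));
      [apply is_derive_Reals, derivable_pt_lim_id | exact Gim |].
    intros; apply Rmult_comm.
Qed.

Lemma is_RInt_gen_eventually (f : R -> R) Fa Fb l :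
  filter_prod Fa Fb (fun ab => is_RInt f (fst ab) (snd ab) l) -> is_RInt_gen f Fa Fb l.
Proof.
  intros [P Q HP HQ H]. intros S HS. apply (Filter_prod _ _ _ P Q HP HQ).
  intros a b Ha Hb. exists l. split; [apply H; auto | apply locally_singleton; exact HS].
Qed.

Lemma is_RInt_gen_vanishing_left (F f : R -> R) t0 x :
  (forall t, is_derive F t (f t)) -> (forall t, continuous f t) -> (forall t, t <= t0 -> F t = 0) ->
  is_RInt_gen f (Rbar_locally m_infty) (at_point x) (F x).
Proof.
  intros HF Hf H0. apply is_RInt_gen_eventually.
  apply (Filter_prod _ _ _ (fun a => a < Rmin x t0) (fun b => b = x)).
  - exists (Rmin x t0). auto.
  - reflexivity.
  - intros a b Ha ->. simpl.
    replace (F x) with (F x - F a) by (rewrite (H0 a); [ring | pose proof (Rmin_r x t0); lra]).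
    apply (is_RInt_derive F f); auto.
Qed.

Lemma antider_Line_cderive F f x :
  cderive F f -> ccontinuous f -> (forall t, t <= 1/4 -> F t = RtoC 0) ->
  antider Line f x = F x /\ antider_defined Line f.
Proof.
  intros HF Hf H0.
  assert (Hre : forall y, is_RInt_gen (re f) (Rbar_locally m_infty) (at_point y) (re F y)).
  { intros y. apply (is_RInt_gen_vanishing_left _ _ (1/4)); try apply HF; try apply Hf.
    intros t Ht. unfold re. rewrite H0 by exact Ht. reflexivity. }
  assert (Him : forall y, is_RInt_gen (im f) (Rbar_locally m_infty) (at_point y) (im F y)).
  { intros y. apply (is_RInt_gen_vanishing_left _ _ (1/4)); try apply HF; try apply Hf.
    intros t Ht. unfold im. rewrite H0 by exact Ht. reflexivity. }
  split.
  - unfold antider, cRInt_gen.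
    rewrite (is_RInt_gen_unique _ _ (Hre x)), (is_RInt_gen_unique _ _ (Him x)).
    unfold re, im. destruct (F x); reflexivity.
  - intros y. split; eexists; [apply Hre | apply Him].
Qed.

Lemma antider_Torus_cderive G g H x :
  cderive G g -> cderive H G -> ccontinuous g ->
  G 0 = RtoC 0 -> G (2 * PI) = RtoC 0 -> H 0 = RtoC 0 -> H (2 * PI) = RtoC 0 ->
  antider Torus g x = G x /\ antider_defined Torus g.
Proof.
  intros HG HH Hg G0 G2 H0 H2.
  assert (Htg := ccontinuous_mul_id g Hg).
  assert (Eg : forall b, cRInt g 0 b = G b).
  { intros b. rewrite (cRInt_cderive G g) by assumption. rewrite G0.
    destruct (G b). unfold Cminus, Cplus, Copp, RtoC; simpl. f_equal; ring. }
  assert (Etg : cRInt (fun t => Cmult (RtoC t) (g t)) 0 (2 * PI) = RtoC 0).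
  { rewrite (cRInt_cderive _ _ 0 (2 * PI) (cderive_mul_id G g H HG HH) Htg).
    rewrite G0, G2, H0, H2. unfold Cminus, Cplus, Copp, Cmult, RtoC; simpl. f_equal; ring. }
  split.
  - unfold antider. rewrite Eg, Etg. destruct (G x). unfold Cplus, RtoC; simpl. f_equal; ring.
  - split; [|split].
    + intros a b. apply cex_RInt_continuous, Hg.
    + intros a b. apply cex_RInt_continuous, Htg.
    + rewrite Eg. exact G2.
Qed.

Lemma neg_step_of_antider d lam g h x :
  antider d (modul lam g) x = modul lam h x -> neg_step d lam g x = Cmult (0, lam) (h x).
Proof.
  intros E. unfold neg_step. rewrite E. unfold modul, cexpi.
  destruct (h x) as [a b].
  pose proof (sin2_cos2 (lam * x)) as P. unfold Rsqr in P.
  unfold Cmult; simpl. rewrite cos_neg, sin_neg.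
  set (co := cos (lam * x)) in *. set (si := sin (lam * x)) in *.
  f_equal.
  - transitivity (- lam * b * (si * si + co * co)); [ring | rewrite P; ring].
  - transitivity (lam * a * (si * si + co * co)); [ring | rewrite P; ring].
Qed.

Lemma Cmod_le_abs_sum z : Cmod z <= Rabs (fst z) + Rabs (snd z).
Proof.
  pose proof (Rabs_pos (fst z)). pose proof (Rabs_pos (snd z)).
  unfold Cmod. rewrite <- (sqrt_pow2 (Rabs (fst z) + Rabs (snd z))) by lra.
  apply sqrt_le_1_alt. rewrite <- (pow2_abs (fst z)), <- (pow2_abs (snd z)). nra.
Qed.

Lemma RInt_ge_on_subinterval (h : R -> R) a b u v w :
  (forall x, continuous h x) -> a <= u -> u <= v -> v <= b ->
  (forall x, a <= x <= b -> 0 <= h x) -> (forall x, u <= x <= v -> w <= h x) ->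
  (v - u) * w <= RInt h a b.
Proof.
  intros Hc Hau Huv Hvb Hpos Hw.
  assert (E : forall s t, ex_RInt h s t)
    by (intros; apply (ex_RInt_continuous (V := R_CompleteNormedModule)); intros; apply Hc).
  rewrite <- (RInt_Chasles h a u b), <- (RInt_Chasles h u v b) by auto.
  assert (0 <= RInt h a u) by (apply RInt_ge_0; auto; intros; apply Hpos; lra).
  assert (0 <= RInt h v b) by (apply RInt_ge_0; auto; intros; apply Hpos; lra).
  assert ((v - u) * w <= RInt h u v).
  { replace ((v - u) * w) with (RInt (fun _ => w) u v) by (rewrite RInt_const; reflexivity).
    apply RInt_le; auto; [apply ex_RInt_const | intros; apply Hw; lra]. }
  change (plus (RInt h a u) (plus (RInt h u v) (RInt h v b))) with
    (RInt h a u + (RInt h u v + RInt h v b)).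
  lra.
Qed.

Lemma RInt_pos_at (h : R -> R) a b x0 :
  (forall x, continuous h x) -> (forall x, a <= x <= b -> 0 <= h x) ->
  a < x0 < b -> 0 < h x0 -> 0 < RInt h a b.
Proof.
  intros Hc Hpos Hx0 Hh0.
  destruct (proj2 (continuity_pt_filterlim h x0) (Hc x0) (h x0 / 2) ltac:(lra))
    as [alp [Halp Hnear]].
  set (r := Rmin (alp / 2) (Rmin (x0 - a) (b - x0)) / 2).
  assert (Hr : 0 < r).
  { unfold r. apply Rdiv_lt_0_compat; [|lra]. apply Rmin_pos; [lra | apply Rmin_pos; lra]. }
  assert (Hr1 : r < alp) by (unfold r; pose proof (Rmin_l (alp / 2) (Rmin (x0 - a) (b - x0))); lra).
  assert (Hr2 : r < x0 - a /\ r < b - x0).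
  { unfold r. pose proof (Rmin_r (alp / 2) (Rmin (x0 - a) (b - x0))).
    pose proof (Rmin_l (x0 - a) (b - x0)). pose proof (Rmin_r (x0 - a) (b - x0)). lra. }
  assert (Hlow : (x0 + r - (x0 - r)) * (h x0 / 2) <= RInt h a b).
  { apply RInt_ge_on_subinterval; auto; try lra.
    intros x Hx. destruct (Req_dec x x0) as [-> | Hne]; [lra|].
    assert (Hd : R_dist (h x) (h x0) < h x0 / 2).
    { apply Hnear. split; [split; [exact I | auto] |]. unfold R_dist. apply Rabs_def1; lra. }
    unfold R_dist in Hd. apply Rabs_def2 in Hd. lra. }
  assert (0 < (x0 + r - (x0 - r)) * (h x0 / 2)) by (apply Rmult_lt_0_compat; lra).
  lra.
Qed.

Lemma is_RInt_gen_Line_window (h : R -> R) :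
  (forall x, continuous h x) -> (forall x, off_window x -> h x = 0) ->
  is_RInt_gen h (Rbar_locally m_infty) (Rbar_locally p_infty) (RInt h 0 1).
Proof.
  intros Hc Hoff. apply is_RInt_gen_eventually.
  apply (Filter_prod _ _ _ (fun a => a < 0) (fun b => 1 < b)); [exists 0 | exists 1 |]; auto.
  intros a b Ha Hb; simpl.
  assert (Hz : forall s t, is_RInt (fun _ : R => 0) s t 0).
  { intros s t. pose proof (is_RInt_const (V := R_NormedModule) s t 0) as H0.
    change (scal (t - s) 0) with ((t - s) * 0) in H0. rewrite Rmult_0_r in H0. exact H0. }
  assert (Hl : is_RInt h a 0 0).
  { apply (is_RInt_ext (fun _ => 0)); [|apply Hz].
    intros x Hx. rewrite Rmin_left, Rmax_right in Hx by lra. rewrite Hoff; [reflexivity|].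
    left; lra. }
  assert (Hr : is_RInt h 1 b 0).
  { apply (is_RInt_ext (fun _ => 0)); [|apply Hz].
    intros x Hx. rewrite Rmin_left, Rmax_right in Hx by lra. rewrite Hoff; [reflexivity|].
    right; lra. }
  assert (Hm : is_RInt h 0 1 (RInt h 0 1)).
  { apply (RInt_correct (V := R_CompleteNormedModule)).
    apply (ex_RInt_continuous (V := R_CompleteNormedModule)). intros; apply Hc. }
  replace (RInt h 0 1) with (plus (plus 0 (RInt h 0 1)) 0)
    by (change (0 + RInt h 0 1 + 0 = RInt h 0 1); ring).
  apply (is_RInt_Chasles h a 1 b); [apply (is_RInt_Chasles h a 0 1) |]; assumption.
Qed.

Lemma bounded_on_interval (f : R -> R) lo hi :
  lo <= hi -> (forall x, continuity_pt f x) ->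
  exists M, 0 <= M /\ forall x, lo <= x <= hi -> Rabs (f x) <= M.
Proof.
  intros Hlh Hc.
  destruct (continuity_ab_maj f lo hi Hlh (fun x _ => Hc x)) as [x1 [H1 _]].
  destruct (continuity_ab_min f lo hi Hlh (fun x _ => Hc x)) as [x2 [H2 _]].
  exists (Rabs (f x1) + Rabs (f x2)).
  pose proof (Rabs_pos (f x1)). pose proof (Rabs_pos (f x2)). split; [lra|].
  intros x Hx. specialize (H1 x Hx). specialize (H2 x Hx).
  apply Rabs_le. pose proof (Rle_abs (f x1)). pose proof (Rabs_maj2 (f x2)). lra.
Qed.

Lemma family_bounded_on_interval (f : nat -> R -> R) K lo hi :
  lo <= hi -> (forall i x, continuity_pt (f i) x) ->
  exists M, 0 <= M /\ forall i x, (i <= K)%nat -> lo <= x <= hi -> Rabs (f i x) <= M.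
Proof.
  intros Hlh Hc. induction K as [|K [M0 [HM0 IH]]].
  - destruct (bounded_on_interval (f 0%nat) lo hi Hlh (Hc 0%nat)) as [M [HM HB]].
    exists M. split; [exact HM|]. intros i x Hi Hx. replace i with 0%nat by lia. auto.
  - destruct (bounded_on_interval (f (S K)) lo hi Hlh (Hc (S K))) as [M1 [HM1 HB]].
    exists (M0 + M1). split; [lra|]. intros i x Hi Hx.
    destruct (Nat.eq_dec i (S K)) as [-> | Hne].
    + specialize (HB x Hx). lra.
    + specialize (IH i x ltac:(lia) Hx). lra.
Qed.

Lemma periodic_INR (f : R -> C) T : (forall y, f (y + T) = f y) ->
  forall (k : nat) y, f (y + INR k * T) = f y.
Proof.
  intros H k. induction k as [|k IH]; intros y.
  - simpl. rewrite Rmult_0_l, Rplus_0_r. reflexivity.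
  - rewrite S_INR. replace (y + (INR k + 1) * T) with (y + INR k * T + T) by ring.
    rewrite H. apply IH.
Qed.

Lemma periodic_reduce (f : R -> C) T : 0 < T -> (forall y, f (y + T) = f y) ->
  forall x, exists y, 0 <= y < T /\ f x = f y.
Proof.
  intros HT Hper x.
  set (z := Int_part (x / T)).
  destruct (base_Int_part (x / T)) as [Hz1 Hz2]. fold z in Hz1, Hz2.
  exists (x - IZR z * T). split.
  - apply Rmult_le_compat_r with (r := T) in Hz1; [|lra].
    assert (Hz3 : x / T < IZR z + 1) by lra.
    apply Rmult_lt_compat_r with (r := T) in Hz3; [|lra].
    replace (x / T * T) with x in Hz1, Hz3 by (field; lra). lra.
  - destruct (Z_le_gt_dec 0 z) as [Hz | Hz].
    + rewrite <- (Z2Nat.id z Hz), <- INR_IZR_INZ.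
      rewrite <- (periodic_INR f T Hper (Z.to_nat z) (x - INR (Z.to_nat z) * T)).
      f_equal. ring.
    + replace z with (- Z.of_nat (Z.to_nat (- z)))%Z by lia.
      rewrite opp_IZR, <- INR_IZR_INZ.
      rewrite <- (periodic_INR f T Hper (Z.to_nat (- z)) x). f_equal. ring.
Qed.

Lemma le_sum_f_R0 (f : nat -> R) i N : (forall k, 0 <= f k) -> (i <= N)%nat -> f i <= sum_f_R0 f N.
Proof.
  intros Hf Hi. induction N as [|N IH].
  - replace i with 0%nat by lia. simpl. lra.
  - simpl. destruct (Nat.eq_dec i (S N)) as [-> | Hne].
    + pose proof (cond_pos_sum f N Hf). lra.
    + pose proof (IH ltac:(lia)). pose proof (Hf (S N)). lra.
Qed.

Lemma ratio_bound_eventually (a b : nat -> R) (L : nat) (C : R) :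
  (forall l, 0 <= b l) -> (forall l, (1 <= l <= L)%nat -> 0 < b l) ->
  (forall l, (L < l)%nat -> a l <= C * b l) ->
  exists C', forall l, (1 <= l)%nat -> a l <= C' * b l.
Proof.
  intros Hb Hpos Hlarge.
  set (S := sum_f_R0 (fun l => Rabs (a l / b l)) L).
  assert (HS : 0 <= S) by (apply cond_pos_sum; intros; apply Rabs_pos).
  exists (Rmax C 0 + S). intros l Hl.
  destruct (le_lt_dec l L) as [Hle | Hgt].
  - assert (Hbl : 0 < b l) by (apply Hpos; lia).
    assert (Hr : Rabs (a l / b l) <= S)
      by (apply (le_sum_f_R0 (fun l => Rabs (a l / b l))); [intros; apply Rabs_pos | exact Hle]).
    replace (a l) with (a l / b l * b l) by (field; lra).
    apply Rmult_le_compat_r; [lra|].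
    pose proof (Rle_abs (a l / b l)). pose proof (Rmax_r C 0). lra.
  - eapply Rle_trans; [apply Hlarge, Hgt|].
    apply Rmult_le_compat_r; [apply Hb|]. pose proof (Rmax_l C 0). lra.
Qed.

Lemma antider_zero d x : antider d (fun _ => RtoC 0) x = RtoC 0.
Proof.
  destruct d; simpl.
  - unfold cRInt, re, im; simpl.
    rewrite (RInt_ext (V := R_CompleteNormedModule) (fun t => t * 0 - 0 * 0) (fun _ => 0))
      by (intros; rewrite !Rmult_0_r; apply Rminus_0_r).
    rewrite (RInt_ext (V := R_CompleteNormedModule) (fun t => t * 0 + 0 * 0) (fun _ => 0))
      by (intros; rewrite !Rmult_0_r; apply Rplus_0_r).
    rewrite !RInt_const. unfold Cplus, RtoC, scal; simpl. unfold mult; simpl. f_equal; ring.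
  - unfold cRInt_gen, re, im; simpl.
    assert (Z : RInt_gen (fun _ : R => 0) (Rbar_locally m_infty) (at_point x) = 0).
    { apply is_RInt_gen_unique, is_RInt_gen_eventually.
      apply (Filter_prod _ _ _ (fun _ => True) (fun _ => True)); [exists 0; auto | exact I |].
      intros a b _ _. pose proof (is_RInt_const (V := R_NormedModule) a b 0) as Hc.
      change (scal (b - a) 0) with ((b - a) * 0) in Hc. rewrite Rmult_0_r in Hc. exact Hc. }
    rewrite Z. reflexivity.
Qed.

Lemma neg_iter_zero d lam j : neg_iter d lam j (fun _ => RtoC 0) = (fun _ => RtoC 0).
Proof.
  induction j as [|j IH]; [reflexivity|].
  change (neg_iter d lam (S j) (fun _ => RtoC 0))
    with (neg_step d lam (neg_iter d lam j (fun _ => RtoC 0))).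
  rewrite IH. extensionality x. unfold neg_step.
  replace (modul lam (fun _ => RtoC 0)) with (fun _ : R => RtoC 0)
    by (extensionality t; unfold modul; rewrite Cmult_0_r; reflexivity).
  rewrite antider_zero. apply Cmult_0_r.
Qed.

(** * Combinations of derivatives of a bump *)

Section Combinations.

Variable chi : R -> R.
Hypothesis chi_der : forall a x, is_derive (Derive_n chi a) x (Derive_n chi (S a) x).
Local Notation D := (Derive_n chi).

Definition comb (c : nat -> R) (N k : nat) (x : R) : R :=
  sum_f_R0 (fun a => c a * D (a + k) x) N.

Lemma is_derive_comb c N k x : is_derive (comb c N k) x (comb c N (S k) x).
Proof.
  unfold comb. induction N as [|N IH]; simpl.
  - apply is_derive_Reals, derivable_pt_lim_scal, is_derive_Reals, chi_der.
  - apply (is_derive_plus (fun x => sum_f_R0 (fun a => c a * D (a + k) x) N)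
                          (fun x => c (S N) * D (S (N + k)) x)); [exact IH|].
    rewrite Nat.add_succ_r.
    apply is_derive_Reals, derivable_pt_lim_scal, is_derive_Reals, chi_der.
Qed.

Lemma ex_derive_comb c N k x : ex_derive (comb c N k) x.
Proof. eexists; apply is_derive_comb. Qed.

Lemma Derive_n_comb c N k x : Derive_n (comb c N 0) k x = comb c N k x.
Proof.
  revert x; induction k as [|k IH]; intros x; simpl; [reflexivity|].
  rewrite (Derive_ext _ (comb c N k) x IH). apply is_derive_unique, is_derive_comb.
Qed.

Lemma ex_derive_n_comb c N k x : ex_derive_n (comb c N 0) k x.
Proof.
  destruct k as [|k]; simpl; [exact I|].
  apply ex_derive_ext with (f := comb c N k); [|apply ex_derive_comb].
  intros t; symmetry; apply Derive_n_comb.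
Qed.

Lemma comb_eq0 c N k x : (forall a, D a x = 0) -> comb c N k x = 0.
Proof.
  intros H. unfold comb. rewrite (sum_eq _ (fun _ => 0)).
  - rewrite sum_cte; ring.
  - intros i _; rewrite H; ring.
Qed.

Lemma comb_plus c c' N k x : comb (fun a => c a + c' a) N k x = comb c N k x + comb c' N k x.
Proof. unfold comb. rewrite <- plus_sum. apply sum_eq; intros; ring. Qed.

Lemma comb_scal r c N k x : comb (fun a => r * c a) N k x = r * comb c N k x.
Proof. unfold comb. rewrite scal_sum. apply sum_eq; intros; ring. Qed.

Definition shift (c : nat -> R) (a : nat) : R := match a with O => 0 | S a' => c a' end.

Lemma comb_shift c N k x : c N = 0 -> comb (shift c) N k x = comb c N (S k) x.
Proof.
  intros HN. destruct N as [|N]; unfold comb.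
  - simpl. rewrite HN; ring.
  - rewrite decomp_sum by lia. simpl (shift c 0). rewrite Rmult_0_l, Rplus_0_l.
    cbn [Nat.pred sum_f_R0]. rewrite HN, Rmult_0_l, Rplus_0_r.
    apply sum_eq; intros i _. simpl. rewrite Nat.add_succ_r. reflexivity.
Qed.

Lemma comb_zero_coef N k x : comb (fun _ => 0) N k x = 0.
Proof. unfold comb. rewrite (sum_eq _ (fun _ => 0)) by (intros; ring). rewrite sum_cte; ring. Qed.

Lemma comb_head c N k x :
  comb c (S N) k x = c 0%nat * D k x + comb (fun a => c (S a)) N (S k) x.
Proof.
  unfold comb. rewrite decomp_sum by lia. cbn [Nat.pred]. f_equal.
  apply sum_eq; intros i _. simpl. rewrite Nat.add_succ_r. reflexivity.
Qed.

Lemma comb_bound c N k x b M : (forall a, Rabs (c a) <= b) ->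
  (forall i, (i <= N + k)%nat -> Rabs (D i x) <= M) ->
  Rabs (comb c N k x) <= b * M * INR (S N).
Proof.
  intros Hc HD. unfold comb. eapply Rle_trans; [apply sum_f_R0_triangle|].
  rewrite <- sum_cte. apply sum_Rle. intros a Ha. rewrite Rabs_mult.
  apply Rmult_le_compat; try apply Rabs_pos; auto. apply HD; lia.
Qed.

(* [cfun N c k] is the k-th derivative of Σ_{a ≤ N} c_a χ^(a), the complex coefficient
   c_a being (fst c a, snd c a); on coefficients, [dtwist lam] acts as ∂ + iλ and
   [ilam lam] as multiplication by iλ. *)
Definition coeffs : Type := ((nat -> R) * (nat -> R))%type.

Definition cfun (N : nat) (c : coeffs) (k : nat) (x : R) : C :=
  (comb (fst c) N k x, comb (snd c) N k x).

Definition ilam (lam : R) (c : coeffs) : coeffs :=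
  (fun a => - lam * snd c a, fun a => lam * fst c a).

Definition dtwist (lam : R) (c : coeffs) : coeffs :=
  (fun a => shift (fst c) a + - lam * snd c a, fun a => shift (snd c) a + lam * fst c a).

Lemma cfun_ilam lam N c k x : cfun N (ilam lam c) k x = Cmult (0, lam) (cfun N c k x).
Proof. unfold cfun, ilam, Cmult; simpl. rewrite !comb_scal. f_equal; ring. Qed.

Lemma cfun_dtwist lam N c k x : fst c N = 0 -> snd c N = 0 ->
  cfun N (dtwist lam c) k x = Cplus (cfun N c (S k) x) (Cmult (0, lam) (cfun N c k x)).
Proof.
  intros H1 H2. unfold cfun, dtwist, Cplus, Cmult; simpl.
  rewrite !comb_plus, !comb_scal, !comb_shift by assumption. f_equal; ring.
Qed.

Lemma cDn_cfun N c k : cDn k (cfun N c 0) = cfun N c k.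
Proof.
  extensionality x. unfold cDn, cfun, re, im; simpl. f_equal; apply Derive_n_comb.
Qed.

Lemma smooth_cfun N c : smooth (cfun N c 0).
Proof. intros k x. split; apply ex_derive_n_comb. Qed.

Lemma cfun_eq0 N c k x : (forall a, D a x = 0) -> cfun N c k x = RtoC 0.
Proof. intros H. unfold cfun. rewrite !comb_eq0 by exact H. reflexivity. Qed.

Lemma ccontinuous_modul_cfun lam N c : ccontinuous (modul lam (cfun N c 0)).
Proof.
  intros t. unfold re, im, modul, cfun, cexpi, Cmult; simpl.
  split; apply (ex_derive_continuous (V := R_NormedModule)); auto_derive;
    repeat split; apply ex_derive_comb.
Qed.

Lemma cderive_modul_cfun lam N c : fst c N = 0 -> snd c N = 0 ->
  cderive (modul lam (cfun N c 0)) (modul lam (cfun N (dtwist lam c) 0)).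
Proof.
  intros H1 H2 t. unfold re, im, modul. rewrite cfun_dtwist by assumption.
  unfold cfun, cexpi, Cmult, Cplus; simpl.
  split; auto_derive; try (repeat split; apply ex_derive_comb);
    rewrite !(is_derive_unique _ _ _ (is_derive_comb _ _ _ _)); ring.
Qed.

Lemma modul_cfun_eq0 lam N c k x : (forall a, D a x = 0) -> modul lam (cfun N c k) x = RtoC 0.
Proof. intros H. unfold modul. rewrite cfun_eq0 by exact H. apply Cmult_0_r. Qed.

Definition coef_deg_le (c : coeffs) (s : nat) : Prop :=
  forall a, (s < a)%nat -> fst c a = 0 /\ snd c a = 0.

Definition coef_one : coeffs := (fun a => match a with O => 1 | S _ => 0 end, fun _ => 0).

Definition twisted_coef (lam : R) (k : nat) : coeffs := Nat.iter k (dtwist lam) coef_one.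

Lemma coef_deg_le_dtwist lam c s : coef_deg_le c s -> coef_deg_le (dtwist lam c) (S s).
Proof.
  intros H [|a] Ha; [lia|]. unfold dtwist; simpl.
  destruct (H a ltac:(lia)) as [A B]. destruct (H (S a) ltac:(lia)) as [A' B'].
  rewrite A, B, A', B'. split; ring.
Qed.

Lemma coef_deg_le_ilam lam c s : coef_deg_le c s -> coef_deg_le (ilam lam c) s.
Proof.
  intros H a Ha. destruct (H a Ha) as [A B]. unfold ilam; simpl. rewrite A, B; split; ring.
Qed.

Lemma coef_deg_le_twisted lam j k : coef_deg_le (Nat.iter j (ilam lam) (twisted_coef lam k)) k.
Proof.
  induction j as [|j IH]; simpl; [|apply coef_deg_le_ilam, IH].
  induction k as [|k IH]; simpl; [|apply coef_deg_le_dtwist, IH].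
  intros [|a] Ha; [lia | split; reflexivity].
Qed.

Lemma ilam_dtwist lam c : ilam lam (dtwist lam c) = dtwist lam (ilam lam c).
Proof. unfold ilam, dtwist; simpl. f_equal; extensionality a; destruct a; simpl; ring. Qed.

Lemma iter_ilam_dtwist lam j c :
  Nat.iter j (ilam lam) (dtwist lam c) = dtwist lam (Nat.iter j (ilam lam) c).
Proof. induction j as [|j IH]; simpl; [reflexivity | rewrite IH; apply ilam_dtwist]. Qed.

Lemma neg_step_dtwist2 d lam N c s :
  (forall a, window_supported d (D a)) -> coef_deg_le c s -> (S s < N)%nat ->
  neg_step d lam (cfun N (dtwist lam (dtwist lam c)) 0) = cfun N (ilam lam (dtwist lam c)) 0 /\
  neg_step_defined d lam (cfun N (dtwist lam (dtwist lam c)) 0).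
Proof.
  intros Hw Hc Hs.
  destruct (Hc N ltac:(lia)) as [c1 c2].
  destruct (coef_deg_le_dtwist lam c s Hc N ltac:(lia)) as [t1 t2].
  set (g := modul lam (cfun N (dtwist lam (dtwist lam c)) 0)).
  set (G := modul lam (cfun N (dtwist lam c) 0)).
  assert (HG : cderive G g) by (apply cderive_modul_cfun; assumption).
  assert (Hanti : forall x, antider d g x = G x /\ antider_defined d g).
  { intros x. destruct d.
    - assert (Hends := fun a => window_supported_Torus_ends _ (Hw a)).
      apply (antider_Torus_cderive G g (modul lam (cfun N c 0)));
        try apply modul_cfun_eq0; try (intros a; apply Hends); try assumption.
      + apply cderive_modul_cfun; assumption.
      + apply ccontinuous_modul_cfun.
    - apply antider_Line_cderive; [exact HG | apply ccontinuous_modul_cfun |].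
      intros t Ht. apply modul_cfun_eq0. intros a. apply (Hw a). left; exact Ht. }
  split.
  - extensionality x. rewrite cfun_ilam. apply neg_step_of_antider, Hanti.
  - apply (Hanti 0).
Qed.

Definition neg_coef (lam : R) (n j : nat) : coeffs :=
  Nat.iter j (ilam lam) (twisted_coef lam (S n - j)).

(* The paper's p_{0,λ}, here (∂ + iλ)^(n+1) χ. *)
Definition p0 (lam : R) (n : nat) : R -> C := cfun (S n) (neg_coef lam n 0) 0.

Lemma neg_coef_dtwist2 lam n j : (j < n)%nat ->
  neg_coef lam n j =
  dtwist lam (dtwist lam (Nat.iter j (ilam lam) (twisted_coef lam (n - 1 - j)))).
Proof.
  intros Hj. unfold neg_coef, twisted_coef.
  replace (S n - j)%nat with (S (S (n - 1 - j))) by lia.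
  simpl. rewrite !iter_ilam_dtwist. reflexivity.
Qed.

Lemma neg_coef_succ lam n j : (j < n)%nat ->
  neg_coef lam n (S j) =
  ilam lam (dtwist lam (Nat.iter j (ilam lam) (twisted_coef lam (n - 1 - j)))).
Proof.
  intros Hj. unfold neg_coef, twisted_coef.
  replace (S n - S j)%nat with (S (n - 1 - j)) by lia.
  simpl. rewrite iter_ilam_dtwist. reflexivity.
Qed.

Lemma neg_step_neg_coef d lam n j : (forall a, window_supported d (D a)) -> (j < n)%nat ->
  neg_step d lam (cfun (S n) (neg_coef lam n j) 0) = cfun (S n) (neg_coef lam n (S j)) 0 /\
  neg_step_defined d lam (cfun (S n) (neg_coef lam n j) 0).
Proof.
  intros Hw Hj. rewrite neg_coef_dtwist2, neg_coef_succ by exact Hj.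
  apply (neg_step_dtwist2 d lam (S n) _ (n - 1 - j)); [exact Hw | apply coef_deg_le_twisted | lia].
Qed.

Lemma neg_iter_p0 d lam n j : (forall a, window_supported d (D a)) -> (j <= n)%nat ->
  neg_iter d lam j (p0 lam n) = cfun (S n) (neg_coef lam n j) 0.
Proof.
  intros Hw. induction j as [|j IH]; intros Hj; [reflexivity|].
  change (neg_iter d lam (S j) (p0 lam n)) with (neg_step d lam (neg_iter d lam j (p0 lam n))).
  rewrite IH by lia. apply neg_step_neg_coef; [exact Hw | lia].
Qed.

Lemma neg_step_defined_p0 d lam n j : (forall a, window_supported d (D a)) -> (j < n)%nat ->
  neg_step_defined d lam (neg_iter d lam j (p0 lam n)).
Proof. intros Hw Hj. rewrite neg_iter_p0 by (assumption || lia). apply neg_step_neg_coef; assumption. Qed.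

Lemma continuity_pt_D a x : continuity_pt (D a) x.
Proof. apply derivable_continuous_pt. exists (D (S a) x). apply is_derive_Reals, chi_der. Qed.

Lemma cfun_periodic N c k T y :
  (forall a y, D a (y + T) = D a y) -> cfun N c k (y + T) = cfun N c k y.
Proof.
  intros H. unfold cfun, comb. f_equal; apply sum_eq; intros i _; rewrite H; reflexivity.
Qed.

Lemma Cmod_cfun_iter_ilam lam N j c k x : 0 <= lam ->
  Cmod (cfun N (Nat.iter j (ilam lam) c) k x) = lam ^ j * Cmod (cfun N c k x).
Proof.
  intros Hl. induction j as [|j IH]; simpl; [ring|].
  rewrite cfun_ilam, Cmod_mult, IH. unfold Cmod at 1; simpl.
  replace (0 * (0 * 1) + lam * (lam * 1)) with (lam ^ 2) by ring.
  rewrite sqrt_pow2 by exact Hl. ring.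
Qed.

Lemma continuous_Cmod2_cfun N c k x : continuous (fun y => Cmod (cfun N c k y) ^ 2) x.
Proof.
  apply (continuous_ext (fun y => comb (fst c) N k y ^ 2 + comb (snd c) N k y ^ 2)).
  - intros y. rewrite Cmod2_alt. reflexivity.
  - apply (ex_derive_continuous (V := R_NormedModule)). auto_derive.
    repeat split; apply ex_derive_comb.
Qed.

Lemma L2sq_cfun d N c k : (forall a, window_supported d (D a)) ->
  L2sq d (cfun N c k) = RInt (fun x => Cmod (cfun N c k x) ^ 2) 0 (cell_end d).
Proof.
  intros Hw. destruct d; [reflexivity|].
  apply is_RInt_gen_unique, is_RInt_gen_Line_window; [apply continuous_Cmod2_cfun|].
  intros x Hx. rewrite cfun_eq0 by (intros a; apply (Hw a), Hx).
  rewrite Cmod_0. ring.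
Qed.

Definition coef_bounded (c : coeffs) (b : R) : Prop :=
  forall a, Rabs (fst c a) <= b /\ Rabs (snd c a) <= b.

Lemma coef_bounded_dtwist lam c b : 1 <= lam -> coef_bounded c b ->
  coef_bounded (dtwist lam c) (2 * lam * b).
Proof.
  intros Hl H a. unfold dtwist; simpl.
  assert (Hb : 0 <= b) by (pose proof (Rabs_pos (fst c a)); pose proof (proj1 (H a)); lra).
  assert (Hs : forall f : nat -> R, (forall a, Rabs (f a) <= b) -> Rabs (shift f a) <= b).
  { intros f Hf. destruct a; simpl; [rewrite Rabs_R0; lra | apply Hf]. }
  pose proof (Hs (fst c) (fun a => proj1 (H a))). pose proof (Hs (snd c) (fun a => proj2 (H a))).
  destruct (H a) as [A B].
  split; (eapply Rle_trans; [apply Rabs_triang|]);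
    rewrite Rabs_mult; rewrite ?Rabs_Ropp, (Rabs_pos_eq lam) by lra; nra.
Qed.

Lemma coef_bounded_ilam lam c b : 0 <= lam -> coef_bounded c b ->
  coef_bounded (ilam lam c) (lam * b).
Proof.
  intros Hl H a. unfold ilam; simpl. destruct (H a) as [A B].
  rewrite !Rabs_mult, Rabs_Ropp, (Rabs_pos_eq lam) by lra.
  split; apply Rmult_le_compat_l; assumption.
Qed.

Lemma coef_bounded_neg_coef lam n j : 1 <= lam -> (j <= n)%nat ->
  coef_bounded (neg_coef lam n j) ((2 * lam) ^ S n).
Proof.
  intros Hl Hj. unfold neg_coef.
  replace (S n) with (j + (S n - j))%nat at 2 by lia.
  generalize (S n - j)%nat as k. intros k.
  induction j as [|j IH]; simpl.
  - induction k as [|k IHk]; simpl.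
    + intros [|a]; simpl; rewrite ?Rabs_R0, ?Rabs_R1; lra.
    + apply coef_bounded_dtwist; assumption.
  - intros a. destruct (coef_bounded_ilam lam _ _ ltac:(lra) (IH ltac:(lia)) a) as [A B].
    assert (0 <= (2 * lam) ^ (j + k)) by (apply pow_le; lra).
    split; nra.
Qed.

(* The coefficients of (∂ + iλ)^k are C(k,a) (iλ)^(k-a); only the modulus λ^k of the
   leading one and the bound (2λ)^k / λ on the others are used. *)
Lemma twisted_coef_head lam k :
  fst (twisted_coef lam k) 0%nat ^ 2 + snd (twisted_coef lam k) 0%nat ^ 2 = lam ^ (2 * k).
Proof.
  induction k as [|k IH]; [simpl; ring|].
  set (c := twisted_coef lam k) in *.
  change (twisted_coef lam (S k)) with (dtwist lam c). unfold dtwist; cbn [fst snd shift].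
  replace (2 * S k)%nat with (2 + 2 * k)%nat by lia. rewrite pow_add, <- IH. ring.
Qed.

Lemma twisted_coef_tail lam k a : 1 <= lam -> (1 <= a)%nat ->
  lam * Rabs (fst (twisted_coef lam k) a) <= (2 * lam) ^ k /\
  lam * Rabs (snd (twisted_coef lam k) a) <= (2 * lam) ^ k.
Proof.
  intros Hl. revert a. induction k as [|k IH]; intros a Ha.
  - destruct a as [|a]; [lia|]. simpl. rewrite Rabs_R0. lra.
  - set (c := twisted_coef lam k) in *.
    assert (Hpow : lam ^ k <= (2 * lam) ^ k) by (apply pow_incr; lra).
    assert (Hhead : Rabs (fst c 0%nat) <= lam ^ k /\ Rabs (snd c 0%nat) <= lam ^ k).
    { pose proof (twisted_coef_head lam k) as E. fold c in E.
      assert (Hk : 0 <= lam ^ k) by (apply pow_le; lra).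
      rewrite Nat.mul_comm, pow_mult, <- (pow2_abs (fst c 0%nat)), <- (pow2_abs (snd c 0%nat)) in E.
      pose proof (Rabs_pos (fst c 0%nat)). pose proof (Rabs_pos (snd c 0%nat)).
      split; nra. }
    assert (Hshift : forall f : nat -> R, Rabs (f 0%nat) <= lam ^ k ->
              (forall a, (1 <= a)%nat -> lam * Rabs (f a) <= (2 * lam) ^ k) ->
              lam * Rabs (shift f a) <= lam * (2 * lam) ^ k).
    { assert (0 <= (2 * lam) ^ k) by (apply pow_le; lra).
      intros f Hf0 Hf. destruct a as [|[|a]]; [lia | simpl; apply Rmult_le_compat_l; lra |].
      specialize (Hf (S a) ltac:(lia)). simpl. nra. }
    pose proof (Hshift (fst c) (proj1 Hhead) (fun a H => proj1 (IH a H))) as S1.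
    pose proof (Hshift (snd c) (proj2 Hhead) (fun a H => proj2 (IH a H))) as S2.
    destruct (IH a Ha) as [A B].
    change (twisted_coef lam (S k)) with (dtwist lam c). unfold dtwist; simpl fst; simpl snd.
    simpl pow.
    split; (eapply Rle_trans; [apply Rmult_le_compat_l; [lra | apply Rabs_triang] |]);
      rewrite Rabs_mult; rewrite ?Rabs_Ropp, (Rabs_pos_eq lam) by lra; nra.
Qed.

Lemma Cmod_p0_ge lam n x M : 1 <= lam ->
  (forall i, (i <= S n)%nat -> Rabs (D i x) <= M) ->
  lam ^ S n * Rabs (chi x) - 4 * (2 ^ n * lam ^ n * M * INR (S n)) <= Cmod (p0 lam n x).
Proof.
  intros Hl HD.
  set (c := twisted_coef lam (S n)).
  set (b := 2 ^ S n * lam ^ n).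
  assert (Htail : forall f : nat -> R,
             (forall a, (1 <= a)%nat -> lam * Rabs (f a) <= (2 * lam) ^ S n) ->
             Rabs (comb (fun a => f (S a)) n 1 x) <= b * M * INR (S n)).
  { intros f Hf. apply comb_bound; [|intros i Hi; apply HD; lia].
    intros a. apply Rmult_le_reg_l with lam; [lra|].
    replace (lam * b) with ((2 * lam) ^ S n) by (unfold b; simpl; rewrite Rpow_mult_distr; ring).
    apply Hf; lia. }
  pose proof (Htail (fst c) (fun a Ha => proj1 (twisted_coef_tail lam (S n) a Hl Ha))) as T1.
  pose proof (Htail (snd c) (fun a Ha => proj2 (twisted_coef_tail lam (S n) a Hl Ha))) as T2.
  set (u := (fst c 0%nat * chi x, snd c 0%nat * chi x)).
  set (r := (comb (fun a => fst c (S a)) n 1 x, comb (fun a => snd c (S a)) n 1 x)).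
  assert (Ep : p0 lam n x = Cplus u r).
  { unfold p0, cfun. change (neg_coef lam n 0) with c. rewrite !comb_head. reflexivity. }
  assert (Cu : Cmod u = lam ^ S n * Rabs (chi x)).
  { unfold u, Cmod; cbn [fst snd].
    replace ((fst c 0%nat * chi x) ^ 2 + (snd c 0%nat * chi x) ^ 2)
      with ((lam ^ S n * Rabs (chi x)) ^ 2).
    - apply sqrt_pow2. apply Rmult_le_pos; [apply pow_le; lra | apply Rabs_pos].
    - rewrite Rpow_mult_distr, pow2_abs, <- pow_mult, Nat.mul_comm, <- (twisted_coef_head lam (S n)).
      fold c. ring. }
  assert (Cr : Cmod r <= 2 * (b * M * INR (S n))).
  { assert (Hr : Cmod r <= Rabs (comb (fun a => fst c (S a)) n 1 x)
                           + Rabs (comb (fun a => snd c (S a)) n 1 x)) by apply Cmod_le_abs_sum.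
    lra. }
  assert (Tr : Cmod u <= Cmod (Cplus u r) + Cmod r).
  { replace u with (Cplus (Cplus u r) (Copp r)) at 1.
    - eapply Rle_trans; [apply Cmod_triangle|]. rewrite Cmod_opp. lra.
    - destruct u, r. unfold Cplus, Copp; simpl. f_equal; ring. }
  replace (4 * (2 ^ n * lam ^ n * M * INR (S n))) with (2 * (b * M * INR (S n)))
    by (unfold b; simpl; ring).
  rewrite Ep. lra.
Qed.

Lemma Hnorm_cfun_le d m N c b M : (forall a, window_supported d (D a)) -> coef_bounded c b ->
  (forall i x, (i <= N + m)%nat -> 0 <= x <= cell_end d -> Rabs (D i x) <= M) ->
  Hnorm d m (cfun N c 0) <= b * M * INR (S N) * sqrt (2 * INR (S m) * cell_end d).
Proof.
  intros Hw Hc HM.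
  pose proof (cell_end_ge_1 d) as Hcell.
  assert (Hb : 0 <= b) by (pose proof (Rabs_pos (fst c 0%nat)); pose proof (proj1 (Hc 0%nat)); lra).
  assert (HM0 : 0 <= M) by (pose proof (Rabs_pos (D 0 0)); pose proof (HM 0%nat 0 ltac:(lia) ltac:(lra)); lra).
  set (Y := b * M * INR (S N)).
  assert (HY : 0 <= Y) by (unfold Y; apply Rmult_le_pos; [nra | apply pos_INR]).
  assert (Hk : forall k, (k <= m)%nat -> L2sq d (cDn k (cfun N c 0)) <= cell_end d * (2 * Y ^ 2)).
  { intros k Hkm. rewrite cDn_cfun, L2sq_cfun by exact Hw.
    replace (cell_end d * (2 * Y ^ 2)) with (RInt (fun _ => 2 * Y ^ 2) 0 (cell_end d))
      by (rewrite RInt_const, Rminus_0_r; reflexivity).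
    apply RInt_le; [lra | | apply ex_RInt_const |].
    - apply (ex_RInt_continuous (V := R_CompleteNormedModule)). intros; apply continuous_Cmod2_cfun.
    - intros x Hx. rewrite Cmod2_alt. unfold cfun, Re, Im; cbn [fst snd].
      assert (B1 : Rabs (comb (fst c) N k x) <= Y).
      { apply comb_bound; [intros a; apply Hc | intros i Hi; apply HM; lia || lra]. }
      assert (B2 : Rabs (comb (snd c) N k x) <= Y).
      { apply comb_bound; [intros a; apply Hc | intros i Hi; apply HM; lia || lra]. }
      rewrite <- (pow2_abs (comb (fst c) N k x)), <- (pow2_abs (comb (snd c) N k x)).
      pose proof (Rabs_pos (comb (fst c) N k x)). pose proof (Rabs_pos (comb (snd c) N k x)).
      nra. }
  unfold Hnorm. rewrite sum_n_Reals.
  replace (Y * sqrt (2 * INR (S m) * cell_end d))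
    with (sqrt (INR (S m) * (cell_end d * (2 * Y ^ 2)))).
  - apply sqrt_le_1_alt. rewrite Rmult_comm, <- sum_cte. apply sum_Rle. exact Hk.
  - pose proof (pos_INR (S m)).
    rewrite <- (sqrt_pow2 Y HY) at 2. rewrite <- sqrt_mult by (apply pow2_ge_0 || nra).
    f_equal. ring.
Qed.

Lemma tuple_Hnorm_p0_le d m n lam M : (forall a, window_supported d (D a)) -> 1 <= lam ->
  (forall i x, (i <= S n + m)%nat -> 0 <= x <= cell_end d -> Rabs (D i x) <= M) ->
  tuple_Hnorm d m n lam (p0 lam n)
  <= INR (S n) * ((2 * lam) ^ S n * M * INR (S (S n)) * sqrt (2 * INR (S m) * cell_end d)).
Proof.
  intros Hw Hl HM. unfold tuple_Hnorm. rewrite sum_n_Reals, Rmult_comm, <- sum_cte.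
  apply sum_Rle. intros j Hj. rewrite neg_iter_p0 by assumption.
  apply Hnorm_cfun_le; [exact Hw | apply coef_bounded_neg_coef; assumption | exact HM].
Qed.

Lemma L2norm_p0_ge d n lam M delta : (forall a, window_supported d (D a)) -> 1 <= lam ->
  (forall i x, (i <= S n)%nat -> 0 <= x <= cell_end d -> Rabs (D i x) <= M) ->
  (forall x, 7/16 <= x <= 9/16 -> delta <= chi x) -> 0 < delta ->
  8 * 2 ^ n * M * INR (S n) <= lam * delta ->
  lam ^ S n * (delta / 2 * sqrt (1/8)) <= L2norm d (p0 lam n).
Proof.
  intros Hw Hl HM Hchi Hdelta Hlarge.
  pose proof (cell_end_ge_1 d) as Hcell.
  assert (Hn : 0 < lam ^ n) by (apply pow_lt; lra).
  assert (HSn : 0 < lam ^ S n) by (apply pow_lt; lra).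
  assert (H8 : 8 * (2 ^ n * lam ^ n * M * INR (S n)) <= lam ^ S n * delta).
  { apply Rmult_le_compat_l with (r := lam ^ n) in Hlarge; [|lra].
    replace (lam ^ S n * delta) with (lam ^ n * (lam * delta)) by (simpl; ring). lra. }
  set (w := lam ^ S n * delta / 2).
  assert (Hw0 : 0 <= w) by (unfold w; apply Rlt_le, Rdiv_lt_0_compat; [apply Rmult_lt_0_compat|]; lra).
  assert (Hpt : forall x, 7/16 <= x <= 9/16 -> w ^ 2 <= Cmod (p0 lam n x) ^ 2).
  { intros x Hx. apply pow_incr. split; [exact Hw0|].
    eapply Rle_trans; [|apply (Cmod_p0_ge lam n x M Hl); intros i Hi; apply HM; lia || lra].
    assert (delta <= Rabs (chi x)) by (eapply Rle_trans; [apply Hchi, Hx | apply Rle_abs]).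
    assert (lam ^ S n * delta <= lam ^ S n * Rabs (chi x)) by (apply Rmult_le_compat_l; lra).
    unfold w. lra. }
  assert (Hsq : 1/8 * w ^ 2 <= L2sq d (p0 lam n)).
  { unfold p0. rewrite L2sq_cfun by exact Hw. replace (1/8) with (9/16 - 7/16) by field.
    apply RInt_ge_on_subinterval; try lra.
    - intros; apply continuous_Cmod2_cfun.
    - intros; apply pow2_ge_0.
    - exact Hpt. }
  unfold L2norm. replace (lam ^ S n * (delta / 2 * sqrt (1/8))) with (sqrt (1/8 * w ^ 2)).
  - apply sqrt_le_1_alt, Hsq.
  - rewrite sqrt_mult, sqrt_pow2 by (lra || apply pow2_ge_0 || exact Hw0). unfold w. field.
Qed.

Lemma snd_cfun_twisted_one lam n x : snd (cfun (S n) (twisted_coef lam 1) 0 x) = lam * chi x.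
Proof.
  change (twisted_coef lam 1) with (dtwist lam coef_one).
  rewrite cfun_dtwist by reflexivity. unfold cfun, Cplus, Cmult, coef_one; cbn [fst snd].
  rewrite !comb_zero_coef, comb_head, comb_zero_coef. simpl. ring.
Qed.

Lemma p0_nonzero d lam n : (forall a, window_supported d (D a)) -> 0 < lam -> 0 < chi (1/2) ->
  exists x0, 0 < x0 < cell_end d /\ p0 lam n x0 <> RtoC 0.
Proof.
  intros Hw Hl Hc. apply NNPP. intros Hno.
  assert (Hin : forall x, 0 < x < cell_end d -> p0 lam n x = RtoC 0).
  { intros x Hx. apply NNPP. intros Hne. apply Hno. exists x. auto. }
  assert (Hzero : p0 lam n = fun _ => RtoC 0).
  { extensionality x. destruct d.
    - pose proof PI_RGT_0.
      assert (Hper : forall y, p0 lam n (y + 2 * PI) = p0 lam n y)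
        by (intros y; apply cfun_periodic; intros a; apply (Hw a)).
      destruct (periodic_reduce _ (2 * PI) ltac:(lra) Hper x) as [y [Hy ->]].
      destruct (Req_dec y 0) as [-> | Hy0].
      + apply cfun_eq0. intros a. apply (window_supported_Torus_ends _ (Hw a)).
      + apply Hin. simpl. lra.
    - destruct (Rle_lt_dec x (1/4)) as [H1 | H1]; [|destruct (Rle_lt_dec (3/4) x) as [H2 | H2]].
      + apply cfun_eq0. intros a. apply (Hw a). left; exact H1.
      + apply cfun_eq0. intros a. apply (Hw a). right; exact H2.
      + apply Hin. simpl. lra. }
  (* Otherwise the n-th iterate (iλ)^n (∂ + iλ) χ would vanish too, but its imaginary
     part at 1/2 is λ^(n+1) χ(1/2). *)
  pose proof (neg_iter_p0 d lam n n Hw (le_n n)) as E.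
  rewrite Hzero, neg_iter_zero in E.
  apply (f_equal (fun f => Cmod (f (1/2)))) in E. simpl in E.
  rewrite Cmod_0 in E. unfold neg_coef in E.
  rewrite Cmod_cfun_iter_ilam in E by lra.
  replace (S n - n)%nat with 1%nat in E by lia.
  set (z := cfun (S n) (twisted_coef lam 1) 0 (1/2)) in E.
  assert (Hz : lam * chi (1/2) <= Cmod z).
  { eapply Rle_trans; [|apply Rmax_Cmod]. eapply Rle_trans; [|apply Rmax_r].
    unfold z. rewrite snd_cfun_twisted_one. apply Rle_abs. }
  assert (0 < lam * chi (1/2)) by (apply Rmult_lt_0_compat; lra).
  assert (0 < lam ^ n * Cmod z) by (apply Rmult_lt_0_compat; [apply pow_lt |]; lra).
  lra.
Qed.

Lemma L2norm_p0_pos d lam n : (forall a, window_supported d (D a)) -> 0 < lam -> 0 < chi (1/2) ->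
  0 < L2norm d (p0 lam n).
Proof.
  intros Hw Hl Hc. destruct (p0_nonzero d lam n Hw Hl Hc) as [x0 [Hx0 Hne]].
  apply sqrt_lt_R0. unfold p0. rewrite L2sq_cfun by exact Hw.
  apply (RInt_pos_at _ _ _ x0); [intros; apply continuous_Cmod2_cfun | intros; apply pow2_ge_0 | exact Hx0 |].
  apply pow_lt, Cmod_gt_0, Hne.
Qed.

Lemma schwartz_cfun d N c b : (forall a, window_supported d (D a)) -> coef_bounded c b ->
  schwartz d (cfun N c 0).
Proof.
  intros Hw Hc. destruct d; simpl; split; try apply smooth_cfun.
  - intros y. apply cfun_periodic. intros a; apply (Hw a).
  - intros a k. rewrite cDn_cfun.
    destruct (family_bounded_on_interval D (N + k) 0 1 ltac:(lra) continuity_pt_D) as [M [HM0 HM]].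
    assert (Hb : 0 <= b) by (pose proof (Rabs_pos (fst c 0%nat)); pose proof (proj1 (Hc 0%nat)); lra).
    set (Y := b * M * INR (S N)).
    assert (HY : 0 <= Y) by (unfold Y; apply Rmult_le_pos; [nra | apply pos_INR]).
    exists (2 * Y). intros x.
    destruct (classic (off_window x)) as [Hoff | Hin].
    + rewrite cfun_eq0 by (intros i; apply (Hw i), Hoff). rewrite Cmod_0, Rmult_0_r. lra.
    + assert (Hx : 1/4 < x < 3/4) by (unfold off_window in Hin; lra).
      assert (Ha : Rabs x ^ a <= 1).
      { rewrite <- (pow1 a). apply pow_incr. split; [apply Rabs_pos|]. rewrite Rabs_pos_eq; lra. }
      assert (B1 : Rabs (comb (fst c) N k x) <= Y).
      { apply comb_bound; [intros i; apply Hc | intros i Hi; apply HM; lia || lra]. }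
      assert (B2 : Rabs (comb (snd c) N k x) <= Y).
      { apply comb_bound; [intros i; apply Hc | intros i Hi; apply HM; lia || lra]. }
      pose proof (Cmod_le_abs_sum (cfun N c k x)) as Hs. unfold cfun in Hs at 2 3; simpl in Hs.
      pose proof (Cmod_ge_0 (cfun N c k x)). pose proof (pow_le (Rabs x) a (Rabs_pos x)).
      nra.
Qed.

Lemma supported_in_unit_cfun d N c : (forall a, window_supported d (D a)) ->
  supported_in_unit d (cfun N c 0).
Proof.
  intros Hw. destruct d; simpl; exists (3/4); split; try lra.
  - intros x Hx Hax. apply cfun_eq0. intros a. apply (Hw a); [exact Hx|].
    unfold off_window, Rabs in *. destruct Rcase_abs; lra.
  - intros x Hax. apply cfun_eq0. intros a. apply (Hw a).
    unfold off_window, Rabs in *. destruct Rcase_abs; lra.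
Qed.

Lemma tuple_Hnorm_p0_uniform d n m delta : (forall a, window_supported d (D a)) -> 0 < delta ->
  (forall x, 7/16 <= x <= 9/16 -> delta <= chi x) ->
  exists C, forall lam : nat, (1 <= lam)%nat ->
    tuple_Hnorm d m n (INR lam) (p0 (INR lam) n) <= C * L2norm d (p0 (INR lam) n).
Proof.
  intros Hw Hdelta Hchi.
  pose proof (cell_end_ge_1 d) as Hcell.
  assert (Hc : 0 < chi (1/2)) by (pose proof (Hchi (1/2) ltac:(lra)); lra).
  destruct (family_bounded_on_interval D (S n + m) 0 (cell_end d) ltac:(lra) continuity_pt_D)
    as [M [HM0 HM]].
  set (K := INR (S n) * (2 ^ S n * M * INR (S (S n)) * sqrt (2 * INR (S m) * cell_end d))).
  set (B := delta / 2 * sqrt (1/8)).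
  assert (HB : 0 < B) by (unfold B; apply Rmult_lt_0_compat; [lra | apply sqrt_lt_R0; lra]).
  destruct (INR_archimed delta (8 * 2 ^ n * M * INR (S n)) Hdelta) as [L HL].
  apply (ratio_bound_eventually _ _ L (K / B)).
  - intros; apply sqrt_pos.
  - intros l Hl. apply L2norm_p0_pos; [exact Hw | apply lt_0_INR; lia | exact Hc].
  - intros l Hl. set (lam := INR l).
    assert (HlL : INR L <= lam) by (apply le_INR; lia).
    assert (Hlam : 1 <= lam) by (apply (le_INR 1); lia).
    assert (Hp : 0 <= lam ^ S n) by (apply pow_le; lra).
    assert (Hup : tuple_Hnorm d m n lam (p0 lam n) <= K * lam ^ S n).
    { eapply Rle_trans; [apply tuple_Hnorm_p0_le; eassumption|].
      unfold K. rewrite Rpow_mult_distr. right; ring. }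
    assert (Hlow : lam ^ S n * B <= L2norm d (p0 lam n)).
    { apply (L2norm_p0_ge d n lam M delta); try assumption.
      - intros i x Hi Hx. apply HM; [lia | exact Hx].
      - nra. }
    assert (HK : 0 <= K).
    { unfold K. apply Rmult_le_pos; [apply pos_INR|]. apply Rmult_le_pos; [|apply sqrt_pos].
      apply Rmult_le_pos; [|apply pos_INR]. apply Rmult_le_pos; [apply pow_le|]; lra. }
    eapply Rle_trans; [exact Hup|].
    replace (K * lam ^ S n) with (K / B * (lam ^ S n * B)) by (field; lra).
    apply Rmult_le_compat_l; [apply Rdiv_le_0_compat; lra | exact Hlow].
Qed.

End Combinations.

Theorem lemma4p1 :
  forall (d : setting) (n : nat), (1 <= n)%nat ->
  exists Cst : nat -> R,
  forall lam : nat, (1 <= lam)%nat ->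
  exists p : R -> C,
    (exists x, p x <> RtoC 0) /\
    schwartz d p /\
    (forall j, (j < n)%nat -> neg_step_defined d (INR lam) (neg_iter d (INR lam) j p)) /\
    (forall j, (1 <= j <= n)%nat -> schwartz d (neg_iter d (INR lam) j p)) /\
    (forall m : nat, tuple_Hnorm d m n (INR lam) p <= Cst m * L2norm d p) /\
    ((forall j, (j <= n)%nat -> supported_in_unit d (neg_iter d (INR lam) j p)) \/
     (forall j, (j <= n)%nat -> fourier_supported_in_unit d (neg_iter d (INR lam) j p))).
Proof.
  (* The construction works for every n. *)
  intros d n _.
  set (chi := bump d).
  pose proof (is_derive_Derive_n_bump d) as Hder.
  pose proof (window_supported_bump d) as Hw.
  destruct (bump_lower d) as [delta [Hdelta Hlow]].
  assert (Hchi : 0 < chi (1/2)) by (pose proof (Hlow (1/2) ltac:(lra)); unfold chi; lra).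
  destruct (functional_choice
              (fun m C => forall lam : nat, (1 <= lam)%nat ->
                 tuple_Hnorm d m n (INR lam) (p0 chi (INR lam) n)
                 <= C * L2norm d (p0 chi (INR lam) n))
              (fun m => tuple_Hnorm_p0_uniform chi Hder d n m delta Hw Hdelta Hlow))
    as [Cst HCst].
  exists Cst. intros lam Hlam. exists (p0 chi (INR lam) n).
  assert (Hl : 1 <= INR lam) by (apply (le_INR 1); exact Hlam).
  split; [|split; [|split; [|split; [|split]]]].
  - destruct (p0_nonzero chi Hder d (INR lam) n Hw ltac:(lra) Hchi) as [x0 [_ Hx0]]. now exists x0.
  - apply (schwartz_cfun chi Hder d _ _ ((2 * INR lam) ^ S n) Hw).
    apply coef_bounded_neg_coef; [exact Hl | lia].
  - intros j Hj. apply neg_step_defined_p0; assumption.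
  - intros j Hj. rewrite neg_iter_p0 by (assumption || lia).
    apply (schwartz_cfun chi Hder d _ _ ((2 * INR lam) ^ S n) Hw).
    apply coef_bounded_neg_coef; [exact Hl | lia].
  - intros m. apply HCst, Hlam.
  - left. intros j Hj. rewrite neg_iter_p0 by assumption. apply supported_in_unit_cfun, Hw.
Qed.
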